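(* Let $q$ be a prime power and $X\subseteq\mathbb{P}^2$ the Hermitian curve over $\mathbb{F}_{q^2}$. Fix an integer $e\in\{2,\dots,q+1\}$ and a point $P\in X(\mathbb{F}_{q^2})$. Let $E\subseteq X$ be the divisor $eP$, seen as a closed degree $e$ subscheme of $\mathbb{P}^2$. Let $T\subseteq\mathbb{P}^2$ be any effective divisor (a plane curve, possibly with multiple components) of degree at most $e-1$ containing $E$. Then $L_{X,P}\subseteq T$, i.e. $L_{X,P}$ is one of the components of $T$.
   Context: $\mathbb{P}^2$ is the projective plane over $\mathbb{F}_{q^2}$ with coordinates $(x:y:z)$. The Hermitian curve $X$ is the projective plane curve with affine equation $y+y^q=x^{q+1}$; it is smooth of degree $q+1$. For $P\in X(\mathbb{F}_{q^2})$, $L_{X,P}$ denotes the tangent line to $X$ at $P$. *)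

(* with multinomials' mpoly for polynomials in x = 'X_0, y = 'X_1, z = 'X_2. *)
From mathcomp Require Import all_boot all_algebra.
From mathcomp Require Import mpoly.

Set Implicit Arguments.
Unset Strict Implicit.
Unset Printing Implicit Defensive.

Import GRing.Theory.
Local Open Scope ring_scope.

Section Hermitian.
Variable F : fieldType.

(* Homogeneous Hermitian polynomial  y z^q + y^q z - x^(q+1)
   (affine equation y + y^q = x^(q+1) in the chart z = 1). *)
Definition herm_poly (q : nat) : {mpoly F[3]} :=
  'X_1 * 'X_2 ^+ q + 'X_1 ^+ q * 'X_2 - 'X_0 ^+ q.+1.

Definition proj_point (p : 'I_3 -> F) : Prop := exists i, p i != 0.

Definition tangent_line (H : {mpoly F[3]}) (p : 'I_3 -> F) : {mpoly F[3]} :=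
  \sum_(i < 3) ((H^`M(i)).@[p])%:MP * 'X_i.

(* Generators of the homogeneous ideal I_p of the point p : 2x2 minors. *)
Definition point_ideal_gens (p : 'I_3 -> F) : seq {mpoly F[3]} :=
  [seq (p i)%:MP * 'X_j - (p j)%:MP * 'X_i | i <- enum 'I_3, j <- enum 'I_3].

Fixpoint pow_gens (gs : seq {mpoly F[3]}) (e : nat) : seq {mpoly F[3]} :=
  match e with
  | 0 => [:: 1]
  | e'.+1 => [seq g * h | g <- gs, h <- pow_gens gs e']
  end.

Definition in_ideal (gs : seq {mpoly F[3]}) (f : {mpoly F[3]}) : Prop :=
  exists c : 'I_(size gs) -> {mpoly F[3]}, f = \sum_(i < size gs) c i * gs`_i.

(* The closed subscheme E = eP of the curve {H = 0} (P smooth), seen in P^2,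
   is contained in the plane curve T = {G = 0}.  Locally at P the ideal of E
   in O_{P^2,P} is (H) + m_P^e; so E \subseteq T iff G lies in the
   localisation at P of the homogeneous ideal (H) + I_P^e, i.e. iff
   S * G lies in (H) + I_P^e for some S with S(P) <> 0. *)
Definition subscheme_contained (H : {mpoly F[3]}) (p : 'I_3 -> F) (e : nat)
    (G : {mpoly F[3]}) : Prop :=
  exists S : {mpoly F[3]},
    S.@[p] != 0 /\ in_ideal (H :: pow_gens (point_ideal_gens p) e) (S * G).

End Hermitian.

(* Let L be the tangent line, choose j with dH/dX_j (P) <> 0 and let s be the
   projection onto {L = 0} along the X_j-axis, so that L divides G - G(s).  The
   direction D = s - P satisfies the tangency equation and, raising it to the
   q-th power and using x^(q^2) = x on F_(q^2), also its conjugate; hence H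
   restricted to the line t |-> P + t D is divisible by t^(q+1): the tangent
   line meets X at P with multiplicity q + 1 >= e.  Restricting to this line
   therefore sends (H) + I_P^e into (t^e), and S * G into (t^e) with S(P) <> 0;
   since G has degree < e in t, G vanishes on the line, i.e. G(s) = 0. *)

From HB Require Import structures.
From mathcomp Require Import all_boot all_algebra finfield.
From mathcomp Require Import mpoly.
From mathcomp Require Import ring zify.

Set Implicit Arguments.
Unset Strict Implicit.
Unset Printing Implicit Defensive.

Import GRing.Theory.
Local Open Scope ring_scope.

Lemma pnat_pchar_expn (R : nzRingType) (l k : nat) :
  l \in [pchar R] -> [pchar R].-nat (l ^ k)%N.
Proof. by move=> charRl; rewrite pnatX pnatE ?charRl ?(pcharf_prime charRl). Qed.

Lemma natr_pchar_expS (R : nzRingType) (l k : nat) :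
  l \in [pchar R] -> (l ^ k.+1)%N%:R = 0 :> R.
Proof. by move=> charRl; apply/eqP; rewrite -(dvdn_pcharf charRl) dvdn_exp. Qed.

Lemma sum_ord3 (V : nmodType) (f : 'I_3 -> V) : \sum_(i < 3) f i = f 0 + f 1 + f 2.
Proof.
rewrite !big_ord_recl big_ord0 addr0 addrA.
by congr (f _ + f _ + f _); apply: val_inj.
Qed.

Lemma leq_size_mul (R : comNzRingType) (a b : {poly R}) (x y : nat) :
  (size a <= x.+1)%N -> (size b <= y.+1)%N -> (size (a * b)%R <= (x + y).+1)%N.
Proof.
move=> ha hb; apply: leq_trans (size_polyMleq _ _) _.
by move: (size a) (size b) ha hb => sa sb; lia.
Qed.

Lemma eq0_of_Xn_dvd_mul (A : idomainType) (s g r : {poly A}) (e : nat) :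
  s`_0 != 0 -> s * g = 'X^e * r -> (size g <= e)%N -> g = 0.
Proof.
move=> s0 hsg hg.
have low k : (k < e)%N -> g`_k = 0.
  elim/ltn_ind: k => k IH ke.
  have := congr1 (fun p : {poly A} => p`_k) hsg.
  rewrite /= coefXnM ke coefM big_ord_recl subn0 big1 ?addr0.
    by move/eqP; rewrite mulf_eq0 (negbTE s0) => /eqP.
  move=> i _; rewrite IH ?mulr0 //; last exact: leq_ltn_trans (leq_subr _ _) ke.
  by rewrite lift0; have := ltn_ord i; lia.
apply/polyP => k; rewrite coef0; have [/low //|ek] := ltnP k e.
by rewrite nth_default // (leq_trans hg ek).
Qed.

Lemma mderivXU n (R : nzRingType) (i j : 'I_n) :
  ('X_j : {mpoly R[n]})^`M(i) = (i == j)%:R.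
Proof.
rewrite mderivX mnm1E eq_sym; have [->|_] := eqVneq i j; last by rewrite scale0r.
have -> : (U_(j) - U_(j) = 0)%MM by apply/mnmP => k; rewrite mnmBE subnn mnm0E.
by rewrite scale1r mpolyX0.
Qed.

Lemma mderiv_expn n (R : comNzRingType) (i : 'I_n) (p : {mpoly R[n]}) (k : nat) :
  (p ^+ k)^`M(i) = (p ^+ k.-1 * p^`M(i)) *+ k.
Proof.
case: k => [|k]; first by rewrite expr0 -mpolyC1 mderivC mulr0n.
elim: k => [|k IH]; first by rewrite expr0 mul1r expr1.
by rewrite exprS mderivM IH mulrnAr mulrA -exprS (mulrS _ k.+1) mulrC.
Qed.

Lemma eq_mmap n (R S : nzRingType) (f1 f2 : R -> S) (h1 h2 : 'I_n -> S) p :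
  f1 =1 f2 -> h1 =1 h2 -> mmap f1 h1 p = mmap f2 h2 p.
Proof.
move=> ef eh; apply: eq_bigr => m _; rewrite ef; congr (_ * _).
exact: mmap1_eq.
Qed.

Lemma rmorph_mmap n (R : nzRingType) (S T : comNzRingType) (f : R -> S)
    (h : 'I_n -> S) (phi : {rmorphism S -> T}) p :
  phi (mmap f h p) = mmap (phi \o f) (phi \o h) p.
Proof.
rewrite rmorph_sum; apply: eq_bigr => m _; rewrite rmorphM rmorph_prod.
by congr (_ * _); apply: eq_bigr => i _; rewrite rmorphXn.
Qed.

Lemma size_mmap_affine n (R : nzRingType) (S : comNzRingType) (f : R -> {poly S})
    (h : 'I_n -> {poly S}) p :
  (forall c, size (f c) <= 1)%N -> (forall i, size (h i) <= 2)%N ->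
  (size (mmap f h p) <= msize p)%N.
Proof.
move=> hf hh; have size_mmap1 m : (size (mmap1 h m) <= (mdeg m).+1)%N.
  rewrite /mmap1 mdegE; elim/big_rec2: _ => [|i a b _ hb]; first by rewrite size_poly1.
  apply: leq_size_mul hb; apply: leq_trans (size_poly_exp_leq _ _) _.
  by have := hh i; case: (size (h i)) => [|[|[|]]] //= _; rewrite ?mul0n ?mul1n.
rewrite /mmap big_seq; elim/big_rec: _ => [|m a mp ha]; first by rewrite size_poly0.
apply: leq_trans (size_polyD _ _) _; rewrite geq_max ha andbT.
apply: leq_trans (msize_mdeg_lt mp); rewrite -(add0n (mdeg m)).
exact: leq_size_mul (hf _) (size_mmap1 m).
Qed.

Lemma msize_dhomog n (R : nzRingType) (p : {mpoly R[n]}) (d : nat) :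
  p \is d.-homog -> (msize p <= d.+1)%N.
Proof.
move/dhomogP => hp; rewrite msizeE big_seq.
by elim/big_rec: _ => // m a mp ha; rewrite geq_max ha (hp m mp) leqnn.
Qed.

Lemma sub_mmapC_dvd n (R : comNzRingType) (L : {mpoly R[n]}) (s : 'I_n -> {mpoly R[n]})
    (f : {mpoly R[n]}) :
  (forall i, exists Q, 'X_i - s i = L * Q) ->
  exists Q, f - mmap (@mpolyC n R) s f = L * Q.
Proof.
move=> hs; pose phi := mmap (@mpolyC n R) s.
pose D g := exists Q, g - phi g = L * Q.
have DM g h : D g -> D h -> D (g * h).
  move=> [Qg eg] [Qh eh]; exists (g * Qh + Qg * phi h).
  rewrite /phi rmorphM -/phi mulrDr mulrA (mulrC L g) -mulrA -eh mulrA -eg.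
  by rewrite mulrBr mulrBl addrA subrK.
have DD g h : D g -> D h -> D (g + h).
  move=> [Qg eg] [Qh eh]; exists (Qg + Qh).
  by rewrite /phi rmorphD -/phi mulrDr -eg -eh opprD addrACA.
have DC c : D c%:MP by exists 0; rewrite /phi mmapC subrr mulr0.
have DX i : D 'X_i by rewrite /D /phi mmapX mmap1U.
rewrite [f]mpolyE; apply: (big_ind D) => [|//|m _]; first by rewrite -mpolyC0.
rewrite -mul_mpolyC; apply: (DM) => //; rewrite mpolyXE_id.
apply: (big_ind D) => [|//|i _]; first by rewrite -mpolyC1.
by elim: (m i) => [|k IH]; rewrite ?expr0 -?mpolyC1 // exprS; apply: (DM).
Qed.

Section LinearForm.
Variables (n : nat) (F : fieldType) (c : 'I_n -> F) (j : 'I_n).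
Hypothesis cj_neq0 : c j != 0.
Local Notation L := (\sum_(i < n) (c i)%:MP * 'X_i : {mpoly F[n]}).

(* Projection onto the hyperplane [L = 0] along the [j]-th coordinate axis. *)
Definition lin_proj (i : 'I_n) : {mpoly F[n]} := 'X_i - ((i == j)%:R / c j)%:MP * L.

Lemma linear_form_lin_proj : \sum_(i < n) (c i)%:MP * lin_proj i = 0.
Proof.
rewrite /lin_proj; set L := \sum_(i < n) (c i)%:MP * 'X_i.
under eq_bigr do rewrite mulrBr; rewrite sumrB -/L (bigD1 j) //= big1 ?addr0.
  by rewrite eqxx mul1r mulrA -rmorphM divff // mul1r subrr.
by move=> i /negbTE ->; rewrite mul0r mpolyC0 mul0r mulr0.
Qed.

Lemma dvd_linear_form (f : {mpoly F[n]}) :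
  mmap (@mpolyC n F) lin_proj f = 0 -> exists Q, f = L * Q.
Proof.
move=> f_proj0; have [i|Q hQ] := sub_mmapC_dvd f (s := lin_proj) (L := L).
  by exists ((i == j)%:R / c j)%:MP; rewrite /lin_proj opprB addrC subrK mulrC.
by exists Q; rewrite -hQ f_proj0 subr0.
Qed.

End LinearForm.

Section IdealImage.
Variables (F : fieldType) (T : comNzRingType).
Variables (ev : {rmorphism {mpoly F[3]} -> T}) (x : T).

Lemma rmorph_pow_gens (gs : seq {mpoly F[3]}) (e : nat) (g : {mpoly F[3]}) :
  (forall g, g \in gs -> exists r, ev g = x * r) ->
  g \in pow_gens gs e -> exists r, ev g = x ^+ e * r.
Proof.
move=> hgs; elim: e g => [|e IH] g /=.
  by rewrite inE => /eqP ->; exists 1; rewrite rmorph1 expr0 mulr1.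
case/allpairsP => [[g1 h] [/= g1_in h_in ->]].
have [r1 e1] := hgs _ g1_in; have [r2 e2] := IH _ h_in.
by exists (r1 * r2); rewrite rmorphM e1 e2 exprS; ring.
Qed.

Lemma rmorph_in_ideal (gs : seq {mpoly F[3]}) (f : {mpoly F[3]}) :
  (forall g, g \in gs -> exists r, ev g = x * r) ->
  in_ideal gs f -> exists r, ev f = x * r.
Proof.
move=> hgs [a ->]; rewrite rmorph_sum.
apply: (big_ind (fun y => exists r, y = x * r)) => [|y z [ry ->] [rz ->]|i _].
- by exists 0; rewrite mulr0.
- by exists (ry + rz); rewrite mulrDr.
have [r hr] := hgs _ (mem_nth 0 (ltn_ord i)).
by exists (ev (a i) * r); rewrite rmorphM hr mulrCA.
Qed.

End IdealImage.

Section LineRestriction.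
Variables (F : fieldType) (A : idomainType) (iota : {rmorphism F -> A}).
Variables (P : 'I_3 -> F) (D : 'I_3 -> A).

(* Restriction to the line [t |-> P + t D], [t] being the polynomial variable. *)
Definition line_eval : {mpoly F[3]} -> {poly A} :=
  mmap (polyC \o iota) (fun i => (iota (P i))%:P + 'X * (D i)%:P).

HB.instance Definition _ := GRing.RMorphism.on line_eval.

Lemma line_evalX (i : 'I_3) : line_eval 'X_i = (iota (P i))%:P + 'X * (D i)%:P.
Proof. by rewrite /line_eval mmapX mmap1U. Qed.

Lemma line_evalC (a : F) : line_eval a%:MP = (iota a)%:P.
Proof. by rewrite /line_eval mmapC. Qed.

Lemma coef0_line_eval (f : {mpoly F[3]}) : (line_eval f)`_0 = iota f.@[P].
Proof.
rewrite -horner_coef0 -horner_evalE rmorph_mmap.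
rewrite (@eq_mmap _ _ _ _ (iota \o idfun) _ (iota \o P)) -?rmorph_mmap // => [a|i] /=.
  by rewrite horner_evalE hornerC.
by rewrite horner_evalE hornerD hornerM hornerX !hornerC mul0r addr0.
Qed.

Lemma horner1_line_eval (f : {mpoly F[3]}) :
  (line_eval f).[1] = mmap iota (fun i => iota (P i) + D i) f.
Proof.
rewrite -horner_evalE rmorph_mmap; apply: eq_mmap => [a|i] /=.
  by rewrite horner_evalE hornerC.
by rewrite horner_evalE hornerD hornerM hornerX !hornerC mul1r.
Qed.

Lemma size_line_eval (f : {mpoly F[3]}) : (size (line_eval f) <= msize f)%N.
Proof.
apply: size_mmap_affine => [a|i] /=; first exact: size_polyC_leq1.
apply: leq_trans (size_polyD _ _) _; rewrite geq_max (leq_trans (size_polyC_leq1 _)) //=.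
by rewrite (@leq_size_mul _ _ _ 1 0) ?size_polyX ?size_polyC_leq1.
Qed.

Lemma line_eval_point_ideal_gens (g : {mpoly F[3]}) :
  g \in point_ideal_gens P -> exists r, line_eval g = 'X * r.
Proof.
case/allpairsP => [[i k] [_ _ ->]] /=.
exists (iota (P i) * D k - iota (P k) * D i)%:P.
rewrite rmorphB !rmorphM /= !line_evalC !line_evalX polyCB !polyCM; ring.
Qed.

Lemma line_eval_subscheme (H G : {mpoly F[3]}) (e : nat) :
  (exists r, line_eval H = 'X^e * r) -> subscheme_contained H P e G ->
  (msize G <= e)%N -> line_eval G = 0.
Proof.
move=> [rH eH] [S [SP0 SG_in]] sizeG.
have [r eSG] : exists r, line_eval (S * G) = 'X^e * r.
  apply: rmorph_in_ideal SG_in => g; rewrite inE => /predU1P [->|g_in].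
    by exists rH.
  exact: rmorph_pow_gens line_eval_point_ideal_gens g_in.
apply: (@eq0_of_Xn_dvd_mul _ (line_eval S) _ r e).
- by rewrite coef0_line_eval fmorph_eq0.
- by rewrite -rmorphM.
- exact: leq_trans (size_line_eval G) sizeG.
Qed.

End LineRestriction.

(* Expanding by additivity of [x |-> x ^+ q], the coefficients of [1], [t] and
   [t ^+ q] are the hypotheses; only the [t ^+ q.+1] term survives. *)
Lemma herm_affine_line (R : comNzRingType) (q : nat)
    (frob : forall x y : R, (x + y) ^+ q = x ^+ q + y ^+ q)
    (p0 p1 p2 d0 d1 d2 t : R) :
  p1 * p2 ^+ q + p1 ^+ q * p2 - p0 ^+ q.+1 = 0 ->
  - p0 ^+ q * d0 + p2 ^+ q * d1 + p1 ^+ q * d2 = 0 ->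
  p1 * d2 ^+ q + p2 * d1 ^+ q - p0 * d0 ^+ q = 0 ->
  (p1 + t * d1) * (p2 + t * d2) ^+ q + (p1 + t * d1) ^+ q * (p2 + t * d2)
    - (p0 + t * d0) ^+ q.+1 =
  t ^+ q.+1 * (d1 * d2 ^+ q + d1 ^+ q * d2 - d0 ^+ q.+1).
Proof.
rewrite !exprS !frob !exprMn.
move: (p0 ^+ q) (p1 ^+ q) (p2 ^+ q) (d0 ^+ q) (d1 ^+ q) (d2 ^+ q) (t ^+ q)
  => P0 P1 P2 D0 D1 D2 T HP HL HC.
apply/eqP; rewrite -subr_eq0; apply/eqP.
transitivity ((p1 * P2 + P1 * p2 - p0 * P0) + t * (- P0 * d0 + P2 * d1 + P1 * d2)
   + T * (p1 * D2 + p2 * D1 - p0 * D0)); first by ring.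
by rewrite HP HL HC !mulr0 !addr0.
Qed.

Section Hermitian.
Variables (F : fieldType) (l k : nat).
Hypothesis charFl : l \in [pchar F].
Local Notation q := (l ^ k.+1)%N.
Local Notation H := (herm_poly F q).
Variable P : 'I_3 -> F.

Let mulrn_q (x : F) : x *+ q = 0.
Proof. by rewrite -mulr_natr natr_pchar_expS ?mulr0. Qed.

Let mulrn_qS (x : F) : x *+ q.+1 = x.
Proof. by rewrite mulrS mulrn_q addr0. Qed.

Local Ltac herm_deriv_tac :=
  rewrite /herm_poly mderivB mderivD !mderivM !mderiv_expn !mderivXU
    !(mevalB, mevalD, mevalM, mevalMn, rmorphXn, mevalXU, meval1) /=
    ?mulrn_q ?mulrn_qS ?mevalXU;
  ring.

Lemma herm_deriv0 : (H^`M(0)).@[P] = - P 0 ^+ q.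
Proof. herm_deriv_tac. Qed.

Lemma herm_deriv1 : (H^`M(1)).@[P] = P 2 ^+ q.
Proof. herm_deriv_tac. Qed.

Lemma herm_deriv2 : (H^`M(2)).@[P] = P 1 ^+ q.
Proof. herm_deriv_tac. Qed.

Lemma herm_deriv_neq0 : proj_point P -> exists j, (H^`M(j)).@[P] != 0.
Proof.
case=> i; have : i \in [:: 0; 1; 2] by case: i => [[|[|[|]]]].
rewrite !inE => /or3P [] /eqP -> Pi_neq0.
- by exists 0; rewrite herm_deriv0 oppr_eq0 expf_neq0.
- by exists 2; rewrite herm_deriv2 expf_neq0.
- by exists 1; rewrite herm_deriv1 expf_neq0.
Qed.

Lemma herm_eval (v : 'I_3 -> F) :
  H.@[v] = v 1 * v 2 ^+ q + v 1 ^+ q * v 2 - v 0 ^+ q.+1.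
Proof.
by rewrite /herm_poly !(mevalB, mevalD, mevalM, rmorphXn, mevalXU) /= !mevalXU.
Qed.

Lemma herm_euler : H.@[P] = 0 -> \sum_(i < 3) (H^`M(i)).@[P] * P i = 0.
Proof.
rewrite herm_eval sum_ord3 herm_deriv0 herm_deriv1 herm_deriv2 => <-.
by rewrite exprS; ring.
Qed.

Section TangentDirection.
Variables (A : idomainType) (iota : {rmorphism F -> A}) (D : 'I_3 -> A).
Hypothesis frobF : forall x : F, x ^+ q ^+ q = x.
Hypothesis HP0 : H.@[P] = 0.
Hypothesis tangentD : \sum_(i < 3) iota (H^`M(i)).@[P] * D i = 0.

Let frobA (x y : A) : (x + y) ^+ q = x ^+ q + y ^+ q.
Proof. exact/exprDn_pchar/pnat_pchar_expn/(rmorph_pchar iota charFl). Qed.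

Lemma herm_tangent_conj :
  iota (P 1) * D 2 ^+ q + iota (P 2) * D 1 ^+ q - iota (P 0) * D 0 ^+ q = 0.
Proof.
have := congr1 (fun x => x ^+ q) tangentD.
have q_gt0 : (0 < q)%N by rewrite expn_gt0 prime_gt0 ?(pcharf_prime charFl).
rewrite /= sum_ord3 herm_deriv0 herm_deriv1 herm_deriv2 expr0n eqn0Ngt q_gt0 /=.
rewrite !frobA !exprMn -!rmorphXn exprNn_pchar ?pnat_pchar_expn //.
by rewrite !frobF rmorphN mulr0n => <-; ring.
Qed.

Lemma line_eval_herm : exists r, line_eval iota P D H = 'X^(q.+1) * r.
Proof.
pose iotaX : {rmorphism F -> {poly A}} := (polyC \o iota)%FUN.
have frobX (x y : {poly A}) : (x + y) ^+ q = x ^+ q + y ^+ q.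
  exact/exprDn_pchar/pnat_pchar_expn/(rmorph_pchar iotaX charFl).
have HP := congr1 iotaX HP0.
rewrite herm_eval rmorph0 !(rmorphB, rmorphD, rmorphM, rmorphXn) /= in HP.
have HL := congr1 polyC tangentD.
rewrite sum_ord3 herm_deriv0 herm_deriv1 herm_deriv2 rmorph0 in HL.
rewrite !(rmorphD, rmorphN, rmorphM, rmorphXn) in HL.
have HC := congr1 polyC herm_tangent_conj.
rewrite rmorph0 !(rmorphB, rmorphD, rmorphM, rmorphXn) in HC.
exists ((D 1)%:P * (D 2)%:P ^+ q + (D 1)%:P ^+ q * (D 2)%:P - (D 0)%:P ^+ q.+1).
rewrite /herm_poly !(rmorphB, rmorphD, rmorphM, rmorphXn) /= !line_evalX.
exact: herm_affine_line.
Qed.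
End TangentDirection.
End Hermitian.

Theorem lemma3p2 (F : finFieldType) (q : nat)
    (hq : exists (l k : nat), prime l /\ (0 < k)%N /\ q = (l ^ k)%N)
    (hF : #|F| = (q ^ 2)%N)
    (e : nat) (he : (2 <= e <= q.+1)%N)
    (P : 'I_3 -> F) (hP : proj_point P) (hPX : (herm_poly F q).@[P] = 0)
    (G : {mpoly F[3]}) (d : nat) (hG0 : G != 0) (hGh : G \is d.-homog)
    (hd : (d <= e.-1)%N)
    (hET : subscheme_contained (herm_poly F q) P e G) :
  exists Q : {mpoly F[3]}, G = tangent_line (herm_poly F q) P * Q.
Proof.
case: hq => l [k [l_prime [k_gt0 q_def]]]; subst q.
case: k k_gt0 => // k _ in hF he hPX hET *.
have charFl : l \in [pchar F].
  by apply: (card_finPcharP (n := (k.+1 * 2)%N)); rewrite ?expnM.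
have frobF (x : F) : x ^+ (l ^ k.+1) ^+ (l ^ k.+1) = x.
  by rewrite -exprM mulnn -hF expf_card.
pose c i := ((herm_poly F (l ^ k.+1))^`M(i)).@[P].
have [j cj_neq0] := herm_deriv_neq0 k charFl hP.
pose D i := lin_proj c j i - (P i)%:MP.
have tangentD : \sum_(i < 3) (c i)%:MP * D i = 0.
  under eq_bigr do rewrite mulrBr -rmorphM.
  by rewrite sumrB linear_form_lin_proj // -rmorph_sum herm_euler // rmorph0 subr0.
have [r Hr] := line_eval_herm (iota := @mpolyC 3 F) charFl frobF hPX tangentD.
have GD0 : line_eval (@mpolyC 3 F) P D G = 0.
  apply: line_eval_subscheme hET _.
  - exists ('X^((l ^ k.+1).+1 - e) * r).
    by rewrite Hr mulrA -exprD subnKC //; case/andP: he.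
  - apply: leq_trans (msize_dhomog hGh) _.
    by rewrite (leq_ltn_trans hd) // ltn_predL (ltnW (andP he).1).
apply: (@dvd_linear_form _ _ c j).
have <- : (line_eval (@mpolyC 3 F) P D G).[1] = mmap (@mpolyC 3 F) (lin_proj c j) G.
  by rewrite horner1_line_eval; apply: eq_mmap => // i; rewrite /D addrC subrK.
by rewrite GD0 horner0.
Qed.
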